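(* For $d\geq 0$ and $n\geq 1$ let $\sigma_d(n)=\sum_{\ell\mid n}\ell^d$. For $n\geq 3$ define \[ D^{\sigma}(n):=\begin{cases} 2n\log_{9/8}(3), & n\equiv 0\pmod 3,\\ (2n+1)\log_{9/8}(3)-\log_{9/8}(n+2), & n\equiv 1\pmod 3,\\ \log_{9/8}(2)+(n+1)\log_{9/8}(3), & n\equiv 2\pmod 3,\ n\neq 5,\\ \log_{9/8}(3888), & n=5. \end{cases} \] Let $n\geq 3$ and let $d$ be an integer with $d>D^{\sigma}(n)$. Then \[ \frac{\bigl(q^{\sigma_d}(n)\bigr)^2}{q^{\sigma_d}(n-1)\,q^{\sigma_d}(n+1)}<1 \quad\text{if and only if}\quad n\equiv 1\pmod 3 . \]
   Context: For a double sequence $\{g_d(n)\}_{d\geq 0,n\geq 1}$ of positive reals, the numbers $q^{g_d}(n)$ ($n\geq 0$) are defined as the coefficients of the power series \[ \sum_{n=0}^{\infty} q^{g_d}(n)\,t^n := \frac{1}{1-\sum_{n=1}^{\infty} g_d(n)\,t^n}. \] Here $g_d=\sigma_d$, i.e. $\sum_n q^{\sigma_d}(n)t^n = 1/(1-\sum_{n\ge1} \sigma_d(n) t^n)$. $\log_{9/8}$ denotes the logarithm to base $9/8$. *)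

From Stdlib Require Import Reals Lra Lia Arith List.
Open Scope R_scope.

Definition sigmad (d n : nat) : R :=
  fold_right Rplus 0
    (map (fun l => INR l ^ d)
       (filter (fun l => Nat.eqb (n mod l) 0) (seq 1 n))).

(* Coefficients q^g(n) of 1/(1 - sum_{n>=1} g(n) t^n):
   q(0) = 1, q(n) = sum_{k=1}^{n} g(k) q(n-k). *)
Fixpoint qlist (g : nat -> R) (n : nat) : list R :=
  (* returns [q(n); q(n-1); ...; q(0)] *)
  match n with
  | O => 1 :: nil
  | S m =>
      let l := qlist g m in
      (* l = [q(m); ...; q(0)], so nth (k-1) l = q(m - (k-1)) = q(n-k) *)
      fold_right Rplus 0
        (map (fun k => g k * nth (k - 1) l 0) (seq 1 n)) :: l
  end.

Definition qcoef (g : nat -> R) (n : nat) : R := hd 0 (qlist g n).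

Definition log98 (x : R) : R := ln x / ln (9/8).

Definition Dsigma (n : nat) : R :=
  if Nat.eqb (n mod 3) 0 then 2 * INR n * log98 3
  else if Nat.eqb (n mod 3) 1 then
    (2 * INR n + 1) * log98 3 - log98 (INR n + 2)
  else if Nat.eqb n 5 then log98 3888
  else log98 2 + (INR n + 1) * log98 3.

(* Expanding the recursion, q(n) is the sum over all compositions
   n = k_1 + ... + k_r of the products sigma_d(k_1) ... sigma_d(k_r), and
   sigma_d(k) = k^d (1 + O(k 2^-d)).  So for large d, q(n) is dominated by the
   compositions maximising k_1 ... k_r: if M(n) is that maximum (3^m, 2 3^m or
   4 3^m according to n mod 3) and c(n) the number of compositions attaining it,
   every other composition loses a factor (8/9)^d, and induction on n gives
     c(n) M(n)^d <= q(n) <= (c(n) + 3^n (8/9)^d / 2) M(n)^d.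
   The ratio M(n)^2 / (M(n-1) M(n+1)) is 9/8, 8/9 and 1 for n = 0, 1, 2 mod 3;
   in the last case c(n)^2 > c(n-1) c(n+1) decides.  The hypothesis d > D(n)
   is what makes (9/8)^d beat the polynomial and 3^n error terms. *)

From Stdlib Require Import Reals Lra Lia Arith List.

Open Scope nat_scope.

Lemma nat_ind3 (b : nat) (P : nat -> Prop) :
  (forall j, j < b + 3 -> P j) -> (forall j, b <= j -> P j -> P (j + 3)) ->
  forall j, P j.
Proof.
  intros Hbase Hstep j. induction j as [j IH] using lt_wf_ind.
  destruct (Nat.lt_ge_cases j (b + 3)) as [Hj|Hj]; [now apply Hbase|].
  replace j with ((j - 3) + 3) by lia. apply Hstep, IH; lia.
Qed.

(* [maxprod j] is the largest product of the parts of a composition of [j]. *)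
Fixpoint maxprod (j : nat) : nat :=
  match j with
  | 0 | 1 => 1
  | 2 => 2
  | 3 => 3
  | 4 => 4
  | S (S (S i)) => 3 * maxprod i
  end.

Lemma maxprod_add3 i : 2 <= i -> maxprod (i + 3) = 3 * maxprod i.
Proof.
  intros Hi. destruct i as [|[|i]]; try lia.
  now replace (S (S i) + 3) with (S (S (S (S (S i))))) by lia.
Qed.

Lemma maxprod_pos j : 1 <= maxprod j.
Proof.
  revert j; apply (nat_ind3 2).
  - intros [|[|[|[|[|j]]]]] Hj; simpl; lia.
  - intros j Hj IH. rewrite maxprod_add3; lia.
Qed.

Lemma maxprod_mul3 m : maxprod (3 * m) = 3 ^ m.
Proof.
  induction m as [|m IH]; [reflexivity|].
  destruct m as [|m]; [reflexivity|].
  replace (3 * S (S m)) with (3 * S m + 3) by lia.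
  rewrite maxprod_add3, IH by lia. now rewrite (Nat.pow_succ_r' 3 (S m)).
Qed.

Lemma maxprod_mul3_add2 m : maxprod (3 * m + 2) = 2 * 3 ^ m.
Proof.
  induction m as [|m IH]; [reflexivity|].
  replace (3 * S m + 2) with ((3 * m + 2) + 3) by lia.
  rewrite maxprod_add3, IH, Nat.pow_succ_r' by lia. lia.
Qed.

Lemma maxprod_mul3_add4 m : maxprod (3 * m + 4) = 4 * 3 ^ m.
Proof.
  induction m as [|m IH]; [reflexivity|].
  replace (3 * S m + 4) with ((3 * m + 4) + 3) by lia.
  rewrite maxprod_add3, IH, Nat.pow_succ_r' by lia. lia.
Qed.

Lemma maxprod_supermul a b : maxprod a * maxprod b <= maxprod (a + b).
Proof.
  revert a b; apply (nat_ind3 2 (fun a => forall b, _)).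
  - intros a Ha b. revert b. apply (nat_ind3 2).
    + intros b Hb.
      destruct a as [|[|[|[|[|a]]]]]; try lia;
      destruct b as [|[|[|[|[|b]]]]]; try lia; simpl; lia.
    + intros b Hb IH. replace (a + (b + 3)) with ((a + b) + 3) by lia.
      rewrite !maxprod_add3 by lia. lia.
  - intros a Ha IH b. replace (a + 3 + b) with ((a + b) + 3) by lia.
    rewrite !maxprod_add3 by lia. specialize (IH b). lia.
Qed.

Lemma maxprod_large k : 5 <= k -> 6 * k <= 5 * maxprod k.
Proof.
  revert k; apply (nat_ind3 5 (fun k => 5 <= k -> _)).
  - intros [|[|[|[|[|[|[|[|k]]]]]]]] Hk Hk5; simpl; lia.
  - intros k Hk IH _. rewrite maxprod_add3 by lia. specialize (IH Hk). lia.
Qed.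

Lemma maxprod_sq_mul3 m :
  8 * (maxprod (3 * m + 3) * maxprod (3 * m + 3))
  = 9 * (maxprod (3 * m + 2) * maxprod (3 * m + 4)).
Proof.
  replace (3 * m + 3) with (3 * (m + 1)) by lia.
  rewrite maxprod_mul3, maxprod_mul3_add2, maxprod_mul3_add4, Nat.pow_add_r. simpl. ring.
Qed.

Lemma maxprod_sq_mul3_add1 m :
  9 * (maxprod (3 * m + 4) * maxprod (3 * m + 4))
  = 8 * (maxprod (3 * m + 3) * maxprod (3 * m + 5)).
Proof.
  replace (3 * m + 3) with (3 * (m + 1)) by lia.
  replace (3 * m + 5) with (3 * (m + 1) + 2) by lia.
  rewrite maxprod_mul3, maxprod_mul3_add2, maxprod_mul3_add4, Nat.pow_add_r. simpl. ring.
Qed.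

Lemma maxprod_sq_mul3_add2 m :
  maxprod (3 * m + 5) * maxprod (3 * m + 5)
  = maxprod (3 * m + 4) * maxprod (3 * m + 6).
Proof.
  replace (3 * m + 5) with (3 * (m + 1) + 2) by lia.
  replace (3 * m + 6) with (3 * (m + 2)) by lia.
  rewrite maxprod_mul3, maxprod_mul3_add2, maxprod_mul3_add4, !Nat.pow_add_r. simpl. ring.
Qed.

Definition is_opt_part (j k : nat) : bool := k * maxprod (j - k) =? maxprod j.

Lemma large_part_gap j k : 5 <= k <= j -> 6 * (k * maxprod (j - k)) <= 5 * maxprod j.
Proof.
  intros Hk. pose proof (maxprod_large k (proj1 Hk)).
  pose proof (maxprod_supermul k (j - k)). replace (k + (j - k)) with j in * by lia. nia.
Qed.

Lemma is_opt_part_large j k : 5 <= k <= j -> is_opt_part j k = false.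
Proof.
  intros Hk. apply Nat.eqb_neq.
  pose proof (large_part_gap j k Hk). pose proof (maxprod_pos j). lia.
Qed.

Lemma is_opt_part_add3 j k :
  1 <= k <= 4 -> k + 2 <= j -> is_opt_part (j + 3) k = is_opt_part j k.
Proof.
  intros Hk Hj. unfold is_opt_part.
  replace (j + 3 - k) with ((j - k) + 3) by lia. rewrite !maxprod_add3 by lia.
  apply Bool.eq_iff_eq_true. rewrite !Nat.eqb_eq. lia.
Qed.

Lemma is_opt_part_shift m r k :
  1 <= k <= 4 -> is_opt_part (3 * m + 6 + r) k = is_opt_part (6 + r) k.
Proof.
  intros Hk. induction m as [|m IH]; [f_equal; lia|].
  replace (3 * S m + 6 + r) with ((3 * m + 6 + r) + 3) by lia.
  rewrite is_opt_part_add3 by lia. exact IH.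
Qed.

Lemma small_part_gap k : 1 <= k <= 4 -> forall j, k <= j -> is_opt_part j k = false ->
  9 * (k * maxprod (j - k)) <= 8 * maxprod j.
Proof.
  intros Hk. apply (nat_ind3 6 (fun j => k <= j -> is_opt_part j k = false -> _)).
  - intros j Hj Hkj Hopt.
    destruct k as [|[|[|[|[|k]]]]]; try lia;
    destruct j as [|[|[|[|[|[|[|[|[|j]]]]]]]]]; try lia;
    vm_compute in Hopt; try discriminate; simpl; lia.
  - intros j Hj IH Hkj. rewrite is_opt_part_add3 by lia. intros Hopt.
    replace (j + 3 - k) with ((j - k) + 3) by lia. rewrite !maxprod_add3 by lia.
    specialize (IH ltac:(lia) Hopt). lia.
Qed.

Lemma suboptimal_part_gap j k : 1 <= k <= j -> is_opt_part j k = false ->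
  9 * (k * maxprod (j - k)) <= 8 * maxprod j.
Proof.
  intros Hk Hopt. destruct (Nat.le_gt_cases 5 k).
  - pose proof (large_part_gap j k ltac:(lia)). lia.
  - apply small_part_gap; [lia | lia | exact Hopt].
Qed.

Open Scope R_scope.

Definition sumR (f : nat -> R) (l : list nat) : R := fold_right Rplus 0 (map f l).

Lemma sumR_nil f : sumR f nil = 0.
Proof. reflexivity. Qed.

Lemma sumR_cons f x l : sumR f (x :: l) = f x + sumR f l.
Proof. reflexivity. Qed.

Lemma sumR_app f l1 l2 : sumR f (l1 ++ l2) = sumR f l1 + sumR f l2.
Proof.
  induction l1 as [|x l1 IH]; simpl app; rewrite ?sumR_nil, ?sumR_cons; [ring|].
  rewrite IH. ring.
Qed.

Lemma sumR_ext f g l : (forall x, In x l -> f x = g x) -> sumR f l = sumR g l.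
Proof. intros H. unfold sumR. f_equal. now apply map_ext_in. Qed.

Lemma sumR_le f g l : (forall x, In x l -> f x <= g x) -> sumR f l <= sumR g l.
Proof.
  induction l as [|x l IH]; intros H; rewrite ?sumR_nil, ?sumR_cons; [lra|].
  apply Rplus_le_compat; [apply H; now left | apply IH; intros y Hy; apply H; now right].
Qed.

Lemma sumR_plus f g l : sumR (fun x => f x + g x) l = sumR f l + sumR g l.
Proof. induction l as [|x l IH]; rewrite ?sumR_nil, ?sumR_cons, ?IH; ring. Qed.

Lemma sumR_scal a f l : sumR (fun x => a * f x) l = a * sumR f l.
Proof. induction l as [|x l IH]; rewrite ?sumR_nil, ?sumR_cons, ?IH; ring. Qed.

Lemma sumR_zero l : sumR (fun _ => 0) l = 0.
Proof. induction l as [|x l IH]; rewrite ?sumR_nil, ?sumR_cons, ?IH; ring. Qed.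

Lemma sumR_seq_succ f n : sumR f (seq 2 n) = sumR (fun k => f (S k)) (seq 1 n).
Proof. rewrite <- seq_shift. unfold sumR. now rewrite map_map. Qed.

Lemma mod3_shift m r : ((3 * m + r) mod 3 = r mod 3)%nat.
Proof. rewrite Nat.add_comm, Nat.mul_comm. apply Nat.Div0.mod_add. Qed.

Lemma div3_shift m r : ((3 * m + r) / 3 = m + r / 3)%nat.
Proof. rewrite Nat.mul_comm. now apply Nat.div_add_l. Qed.

(* Number of compositions of [j] whose parts have product [maxprod j]; the
   closed form is wrong at [j = 1], hence the special case. *)
Definition opt_count (j : nat) : R :=
  if (j =? 1)%nat then 1 else
  match (j mod 3)%nat with
  | 0%nat => 1
  | 1%nat => INR (j / 3) * (INR (j / 3) + 3) / 2
  | _ => INR (j / 3) + 1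
  end.

Lemma opt_count_mul3 m : opt_count (3 * m) = 1.
Proof.
  unfold opt_count. rewrite <- (Nat.add_0_r (3 * m)), mod3_shift.
  now destruct (Nat.eqb_spec (3 * m + 0) 1).
Qed.

Lemma opt_count_mul3_add2 m : opt_count (3 * m + 2) = INR m + 1.
Proof.
  unfold opt_count. rewrite mod3_shift, div3_shift, Nat.add_0_r.
  now destruct (Nat.eqb_spec (3 * m + 2) 1); [lia|].
Qed.

Lemma opt_count_mul3_add4 m : opt_count (3 * m + 4) = (INR m + 1) * (INR m + 4) / 2.
Proof.
  unfold opt_count. rewrite mod3_shift, div3_shift.
  destruct (Nat.eqb_spec (3 * m + 4) 1); [lia|].
  change (4 / 3)%nat with 1%nat. rewrite plus_INR. simpl. field.
Qed.

Lemma opt_count_mul3_add3 m : opt_count (3 * m + 3) = 1.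
Proof. replace (3 * m + 3)%nat with (3 * (m + 1))%nat by lia. apply opt_count_mul3. Qed.

Lemma opt_count_mul3_add5 m : opt_count (3 * m + 5) = INR m + 2.
Proof.
  replace (3 * m + 5)%nat with (3 * (m + 1) + 2)%nat by lia.
  rewrite opt_count_mul3_add2, plus_INR. simpl. ring.
Qed.

Lemma opt_count_ge1 j : 1 <= opt_count j.
Proof.
  destruct (Nat.eq_dec j 1) as [->|Hj1]; [cbv; lra|].
  pose proof (Nat.div_mod j 3 ltac:(lia)) as Hj.
  pose proof (Nat.mod_upper_bound j 3 ltac:(lia)).
  destruct (j mod 3)%nat as [|[|[|r]]] eqn:E; try lia.
  - rewrite Hj, Nat.add_0_r, opt_count_mul3. lra.
  - replace j with (3 * (j / 3 - 1) + 4)%nat by lia. rewrite opt_count_mul3_add4.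
    pose proof (pos_INR (j / 3 - 1)). nra.
  - rewrite Hj, opt_count_mul3_add2. pose proof (pos_INR (j / 3)). lra.
Qed.

Lemma seq_1_split j : (4 <= j)%nat -> seq 1 j = (1 :: 2 :: 3 :: 4 :: seq 5 (j - 4))%nat.
Proof. intros. replace j with (4 + (j - 4))%nat at 1 by lia. now rewrite seq_app. Qed.

(* The optimal compositions of [j] are those starting with an optimal part. *)
Lemma opt_count_rec j : (1 <= j)%nat ->
  opt_count j = sumR (fun k => if is_opt_part j k then opt_count (j - k) else 0) (seq 1 j).
Proof.
  intros Hj. destruct (Nat.lt_ge_cases j 6) as [Hj6|Hj6].
  { destruct j as [|[|[|[|[|[|j]]]]]]; try lia; cbv; lra. }
  rewrite seq_1_split, !sumR_cons by lia.
  rewrite (sumR_ext _ (fun _ => 0)), sumR_zero.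
  2: { intros k Hk. apply in_seq in Hk. now rewrite is_opt_part_large by lia. }
  pose proof (Nat.div_mod (j - 6) 3 ltac:(lia)).
  pose proof (Nat.mod_upper_bound (j - 6) 3 ltac:(lia)).
  replace j with (3 * ((j - 6) / 3) + 6 + (j - 6) mod 3)%nat by lia.
  set (m := ((j - 6) / 3)%nat).
  destruct ((j - 6) mod 3)%nat as [|[|[|r]]]; try lia;
    rewrite !is_opt_part_shift by lia; unfold is_opt_part; simpl (Nat.eqb _ _); cbv iota beta.
  - replace (3 * m + 6 + 0 - 3)%nat with (3 * (m + 1))%nat by lia.
    replace (3 * m + 6 + 0)%nat with (3 * (m + 2))%nat by lia.
    rewrite !opt_count_mul3. lra.
  - replace (3 * m + 6 + 1 - 2)%nat with (3 * (m + 1) + 2)%nat by lia.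
    replace (3 * m + 6 + 1 - 3)%nat with (3 * m + 4)%nat by lia.
    replace (3 * m + 6 + 1 - 4)%nat with (3 * (m + 1))%nat by lia.
    replace (3 * m + 6 + 1)%nat with (3 * (m + 1) + 4)%nat by lia.
    rewrite opt_count_mul3_add2, !opt_count_mul3_add4, opt_count_mul3, plus_INR. simpl. lra.
  - replace (3 * m + 6 + 2 - 2)%nat with (3 * (m + 2))%nat by lia.
    replace (3 * m + 6 + 2 - 3)%nat with (3 * (m + 1) + 2)%nat by lia.
    replace (3 * m + 6 + 2)%nat with (3 * (m + 2) + 2)%nat by lia.
    rewrite !opt_count_mul3_add2, opt_count_mul3, !plus_INR. simpl. lra.
Qed.

Definition opt_count_sum (j : nat) : R := sumR (fun k => opt_count (j - k)) (seq 1 j).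

Lemma opt_count_sum_succ j : opt_count_sum (S j) = opt_count j + opt_count_sum j.
Proof.
  unfold opt_count_sum. change (seq 1 (S j)) with (1%nat :: seq 2 j).
  rewrite sumR_cons, sumR_seq_succ. now replace (S j - 1)%nat with j by lia.
Qed.

Lemma opt_count_le_sum j : (1 <= j)%nat -> opt_count j <= opt_count_sum j.
Proof.
  intros Hj. rewrite opt_count_rec by exact Hj. apply sumR_le. intros k _.
  pose proof (opt_count_ge1 (j - k)). destruct (is_opt_part j k); lra.
Qed.

Lemma opt_count_sum_le j : (1 <= j)%nat -> 2 * opt_count_sum j <= 2 ^ j.
Proof.
  induction j as [|j IH]; intros Hj; [lia|].
  destruct (Nat.eq_dec j 0) as [->|Hj0]; [cbv; lra|].
  rewrite opt_count_sum_succ. pose proof (opt_count_le_sum j ltac:(lia)).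
  specialize (IH ltac:(lia)). simpl. lra.
Qed.

Lemma nth_qlist g m i : (i <= m)%nat -> nth i (qlist g m) 0 = qcoef g (m - i).
Proof.
  revert i; induction m as [|m IH]; intros i Hi.
  - now replace i with 0%nat by lia.
  - destruct i as [|i]; [reflexivity|]. simpl. apply IH. lia.
Qed.

Lemma qcoef_rec g j : (1 <= j)%nat ->
  qcoef g j = sumR (fun k => g k * qcoef g (j - k)) (seq 1 j).
Proof.
  intros Hj. destruct j as [|j]; [lia|]. apply sumR_ext.
  intros k Hk. apply in_seq in Hk. rewrite nth_qlist by lia. do 2 f_equal. lia.
Qed.

Lemma sumR_filter_bounds f p l M : 0 <= M ->
  (forall x, In x l -> p x = true -> 0 <= f x <= M) ->
  0 <= sumR f (filter p l) <= INR (length l) * M.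
Proof.
  intros HM. induction l as [|x l IH]; intros H; [cbn [filter length INR]; rewrite sumR_nil; lra|].
  assert (IH' := IH (fun y Hy => H y (or_intror Hy))).
  cbn [filter length]. rewrite S_INR.
  destruct (p x) eqn:Hpx; rewrite ?sumR_cons.
  - assert (0 <= f x <= M) by (apply H; [now left | exact Hpx]). nra.
  - nra.
Qed.

Lemma proper_divisor_le_half k l : (1 <= l < k)%nat -> (k mod l = 0)%nat -> (2 * l <= k)%nat.
Proof.
  intros Hl Hdiv. apply Nat.Div0.mod_divides in Hdiv as [q ->].
  destruct q as [|[|q]]; nia.
Qed.

Lemma sigmad_bounds d k : (1 <= k)%nat ->
  INR k ^ d <= sigmad d k <= INR k ^ d * (1 + INR k * (/2) ^ d).
Proof.
  intros Hk. change (sigmad d k) with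
    (sumR (fun l => INR l ^ d) (filter (fun l => Nat.eqb (k mod l) 0) (seq 1 k))).
  replace (seq 1 k) with (seq 1 (k - 1) ++ k :: nil)
    by (replace k with (S (k - 1)) at 3 by lia; rewrite seq_S; f_equal; f_equal; lia).
  rewrite filter_app, sumR_app. cbn [filter]. rewrite Nat.Div0.mod_same. cbn [Nat.eqb].
  rewrite sumR_cons, sumR_nil.
  assert (Hhalf : 0 <= INR k ^ d * (/2) ^ d)
    by (apply Rmult_le_pos; apply pow_le; [apply pos_INR | lra]).
  destruct (sumR_filter_bounds (fun l => INR l ^ d) (fun l => Nat.eqb (k mod l) 0)
              (seq 1 (k - 1)) (INR k ^ d * (/2) ^ d) Hhalf) as [Hlo Hhi].
  { intros l Hl Hdiv. apply in_seq in Hl. apply Nat.eqb_eq in Hdiv.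
    pose proof (le_INR _ _ (proper_divisor_le_half k l ltac:(lia) Hdiv)) as H2.
    rewrite mult_INR in H2. split; [apply pow_le, pos_INR|].
    rewrite <- Rpow_mult_distr. apply pow_incr. simpl in H2. pose proof (pos_INR l). lra. }
  rewrite length_seq in Hhi. assert (INR (k - 1) <= INR k) by (apply le_INR; lia).
  split; nra.
Qed.

Definition dpow (d j : nat) : R := INR (maxprod j) ^ d.

Lemma dpow_pos d j : 0 < dpow d j.
Proof. apply pow_lt, lt_0_INR. pose proof (maxprod_pos j). lia. Qed.

Lemma dpow_part d j k : INR k ^ d * dpow d (j - k) = INR (k * maxprod (j - k)) ^ d.
Proof. unfold dpow. now rewrite mult_INR, Rpow_mult_distr. Qed.

Lemma dpow_opt_part d j k : is_opt_part j k = true -> INR k ^ d * dpow d (j - k) = dpow d j.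
Proof. intros Hopt. apply Nat.eqb_eq in Hopt. now rewrite dpow_part, Hopt. Qed.

Lemma dpow_suboptimal_part d j k : (1 <= k <= j)%nat -> is_opt_part j k = false ->
  INR k ^ d * dpow d (j - k) <= (8/9) ^ d * dpow d j.
Proof.
  intros Hk Hopt. rewrite dpow_part. unfold dpow. rewrite <- Rpow_mult_distr.
  pose proof (le_INR _ _ (suboptimal_part_gap j k Hk Hopt)) as Hgap.
  rewrite !mult_INR in *. apply pow_incr.
  pose proof (pos_INR k). pose proof (pos_INR (maxprod (j - k))).
  split; [nra|]. simpl in Hgap. lra.
Qed.

Lemma qcoef_lower d j : opt_count j * dpow d j <= qcoef (sigmad d) j.
Proof.
  induction j as [j IH] using lt_wf_ind.
  destruct (Nat.eq_dec j 0) as [->|Hj].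
  { change (1 * 1 ^ d <= 1). rewrite pow1. lra. }
  rewrite opt_count_rec, qcoef_rec by lia. rewrite Rmult_comm, <- sumR_scal.
  apply sumR_le. intros k Hk. apply in_seq in Hk.
  destruct (sigmad_bounds d k ltac:(lia)) as [Hsig _].
  specialize (IH (j - k)%nat ltac:(lia)).
  pose proof (opt_count_ge1 (j - k)). pose proof (dpow_pos d (j - k)).
  assert (0 <= INR k ^ d) by (apply pow_le, pos_INR).
  destruct (is_opt_part j k) eqn:Hopt.
  - rewrite <- (dpow_opt_part d j k Hopt).
    apply Rle_trans with (INR k ^ d * (opt_count (j - k) * dpow d (j - k))); [nra|].
    apply Rmult_le_compat; nra.
  - rewrite Rmult_0_r. apply Rmult_le_pos; nra.
Qed.

Lemma qcoef_pos d j : 0 < qcoef (sigmad d) j.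
Proof.
  pose proof (qcoef_lower d j). pose proof (opt_count_ge1 j). pose proof (dpow_pos d j). nra.
Qed.

Definition err (d j : nat) : R := 3 ^ j * (8/9) ^ d / 2.

Lemma pow89_bounds d : 0 < (8/9) ^ d <= 1.
Proof. split; [apply pow_lt; lra|]. rewrite <- (pow1 d). apply pow_incr. lra. Qed.

Lemma pow89_mul_pow98 d : (8/9) ^ d * (9/8) ^ d = 1.
Proof. rewrite <- Rpow_mult_distr, <- (pow1 d). f_equal. field. Qed.

Lemma err_nonneg d j : 0 <= err d j.
Proof. unfold err. pose proof (pow_le 3 j). pose proof (pow_le (8/9) d). nra. Qed.

Lemma sum_pow3 j : sumR (fun k => 3 ^ (j - k)) (seq 1 j) = (3 ^ j - 1) / 2.
Proof.
  induction j as [|j IH]; [cbv; lra|].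
  rewrite seq_S, sumR_app, sumR_cons, sumR_nil, Nat.sub_diag.
  rewrite (sumR_ext _ (fun k => 3 * 3 ^ (j - k))), sumR_scal, IH.
  - simpl. lra.
  - intros k Hk. apply in_seq in Hk. now replace (S j - k)%nat with (S (j - k)) by lia.
Qed.

Lemma sum_err d j : sumR (fun k => err d (j - k)) (seq 1 j) = (3 ^ j - 1) * (8/9) ^ d / 4.
Proof.
  unfold err. rewrite (sumR_ext _ (fun k => (8/9) ^ d / 2 * 3 ^ (j - k))) by (intros; lra).
  rewrite sumR_scal, sum_pow3. field.
Qed.

Lemma pow2_le_pow3 j : (2 <= j)%nat -> 9 * 2 ^ j <= 4 * 3 ^ j.
Proof.
  induction j as [|j IH]; intros Hj; [lia|].
  destruct (Nat.eq_dec j 1) as [->|Hj1]; [simpl; lra|].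
  specialize (IH ltac:(lia)). pose proof (pow_le 2 j). simpl. lra.
Qed.

Lemma tail_nonneg d N : 0 <= INR N * (/2) ^ d.
Proof. apply Rmult_le_pos; [apply pos_INR | apply pow_le; lra]. Qed.

Lemma sigmad_le d N k : (1 <= k <= N)%nat ->
  sigmad d k <= INR k ^ d * (1 + INR N * (/2) ^ d).
Proof.
  intros Hk. destruct (sigmad_bounds d k ltac:(lia)) as [_ Hsig].
  eapply Rle_trans; [exact Hsig|]. apply Rmult_le_compat_l; [apply pow_le, pos_INR|].
  assert (INR k <= INR N) by (apply le_INR; lia). pose proof (pow_le (/2) d). nra.
Qed.

(* An optimal part costs its full share; any other part loses a factor [(8/9)^d]. *)
Lemma qcoef_term_le d N J k : (1 <= k <= J)%nat -> (J <= N)%nat ->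
  qcoef (sigmad d) (J - k) <= (opt_count (J - k) + err d (J - k)) * dpow d (J - k) ->
  sigmad d k * qcoef (sigmad d) (J - k)
  <= (1 + INR N * (/2) ^ d) * dpow d J *
     ((if is_opt_part J k then opt_count (J - k) else 0)
      + ((8/9) ^ d * opt_count (J - k) + err d (J - k))).
Proof.
  intros Hk HJ Hup.
  pose proof (sigmad_le d N k ltac:(lia)) as Hsig.
  destruct (sigmad_bounds d k ltac:(lia)) as [Hsig0 _].
  pose proof (opt_count_ge1 (J - k)). pose proof (err_nonneg d (J - k)).
  pose proof (qcoef_pos d (J - k)). pose proof (dpow_pos d (J - k)). pose proof (dpow_pos d J).
  pose proof (pow89_bounds d) as Hrho.
  assert (Hk0 : 0 <= INR k ^ d) by (apply pow_le, pos_INR).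
  pose proof (tail_nonneg d N) as Htau.
  set (tau := INR N * (/2) ^ d) in *.
  set (c := opt_count (J - k)) in *. set (e := err d (J - k)) in *.
  clearbody tau c e.
  assert (Hstep : sigmad d k * qcoef (sigmad d) (J - k)
                  <= (1 + tau) * (c + e) * (INR k ^ d * dpow d (J - k))).
  { apply Rle_trans with (INR k ^ d * (1 + tau) * ((c + e) * dpow d (J - k))).
    - apply Rmult_le_compat; nra.
    - nra. }
  destruct (is_opt_part J k) eqn:Hopt.
  - rewrite (dpow_opt_part d J k Hopt) in Hstep.
    assert (0 <= (1 + tau) * dpow d J * ((8/9) ^ d * c)) by (apply Rmult_le_pos; nra).
    lra.
  - pose proof (dpow_suboptimal_part d J k ltac:(lia) Hopt) as Hsub.
    assert (0 <= (1 + tau) * dpow d J * (e * (1 - (8/9) ^ d)))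
      by (apply Rmult_le_pos; apply Rmult_le_pos; lra).
    apply Rle_trans with ((1 + tau) * (c + e) * ((8/9) ^ d * dpow d J)); [|lra].
    eapply Rle_trans; [exact Hstep|]. apply Rmult_le_compat_l; nra.
Qed.

(* Since [opt_count_sum J <= 2^(J-1) <= (2/9) 3^J], the extra terms total less than
   [0.48 * 3^J (8/9)^d], within the budget [err d J]. *)
Lemma error_budget d N J : INR N * (/2) ^ d <= (8/9) ^ d / 100 -> (2 <= J)%nat ->
  (1 + INR N * (/2) ^ d)
  * (opt_count J + ((8/9) ^ d * opt_count_sum J + (3 ^ J - 1) * (8/9) ^ d / 4))
  <= opt_count J + err d J.
Proof.
  intros Htail HJ. unfold err.
  pose proof (opt_count_ge1 J). pose proof (opt_count_le_sum J ltac:(lia)).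
  pose proof (opt_count_sum_le J ltac:(lia)). pose proof (pow2_le_pow3 J HJ).
  pose proof (pow_R1_Rle 3 J ltac:(lra)). pose proof (pow89_bounds d).
  pose proof (tail_nonneg d N) as Htau.
  set (tau := INR N * (/2) ^ d) in *. set (rho := (8/9) ^ d) in *.
  set (c := opt_count J) in *. set (s := opt_count_sum J) in *. set (x := 3 ^ J) in *.
  clearbody tau rho c s x.
  assert (Hs : s <= 2 * x / 9) by lra.
  assert (Hc : tau * c <= rho / 100 * (2 * x / 9)) by (apply Rmult_le_compat; lra).
  assert (Hb : (1 + tau) * (rho * s + (x - 1) * rho / 4)
               <= (1 + 1/100) * (rho * (2 * x / 9) + x * rho / 4))
    by (apply Rmult_le_compat; nra).
  nra.
Qed.

Lemma qcoef_upper d N j : INR N * (/2) ^ d <= (8/9) ^ d / 100 -> (j <= N)%nat ->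
  qcoef (sigmad d) j <= (opt_count j + err d j) * dpow d j.
Proof.
  intros Htail. induction j as [j IH] using lt_wf_ind. intros Hj.
  pose proof (err_nonneg d j).
  destruct (Nat.lt_ge_cases j 2) as [Hj2|Hj2].
  { destruct j as [|[|j]]; [| |lia];
      [change (qcoef (sigmad d) 0) with 1 | rewrite qcoef_rec by lia];
      change (dpow d _) with (1 ^ d); rewrite pow1.
    - change (opt_count 0) with 1. lra.
    - change (sumR _ _) with (sigmad d 1 * 1 + 0). change (sigmad d 1) with (1 ^ d + 0).
      change (opt_count 1) with 1. rewrite pow1. lra. }
  rewrite qcoef_rec by lia. eapply Rle_trans.
  { apply sumR_le. intros k Hk. apply in_seq in Hk.
    apply (qcoef_term_le d N); [lia | lia | apply IH; lia]. }
  rewrite sumR_scal, sumR_plus, <- opt_count_rec, sumR_plus, sumR_scal, sum_err by lia.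
  fold (opt_count_sum j). pose proof (dpow_pos d j) as Hpos.
  pose proof (Rmult_le_compat_r _ _ _ (Rlt_le _ _ Hpos) (error_budget d N j Htail Hj2)).
  lra.
Qed.

Lemma pow3_lower k : 2 * INR k + 1 <= 3 ^ k.
Proof.
  induction k as [|k IH]; [simpl; lra|].
  rewrite S_INR. pose proof (pow_R1_Rle 3 k ltac:(lra)). simpl. lra.
Qed.

Lemma tail_small_of_growth d N : 2 * 3 ^ N < (9/8) ^ d -> INR N * (/2) ^ d <= (8/9) ^ d / 100.
Proof.
  intros Hgrowth.
  assert (Hw4 : ((9/8) ^ d) ^ 4 <= (16/9) ^ d).
  { rewrite <- pow_mult, Nat.mul_comm, pow_mult. apply pow_incr.
    split; [apply pow_le; lra | simpl; lra]. }
  set (w := (9/8) ^ d) in *. clearbody w.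
  assert (Hsplit : (/2) ^ d * (16/9) ^ d = (8/9) ^ d).
  { rewrite <- Rpow_mult_distr. f_equal. field. }
  pose proof (pow3_lower N). pose proof (pos_INR N). pose proof (pow_lt (/2) d ltac:(lra)).
  assert (Hw : 2 * (2 * INR N + 1) <= w) by lra.
  assert (Hw2 : 32 * INR N <= w ^ 2).
  { apply Rle_trans with ((2 * (2 * INR N + 1)) ^ 2).
    - pose proof (pow2_ge_0 (2 * INR N - 1)). simpl in *. nra.
    - apply pow_incr. lra. }
  assert (4 <= w ^ 2) by (simpl; nra).
  assert (100 * INR N <= w ^ 4) by (replace (w ^ 4) with (w ^ 2 * w ^ 2) by ring; nra).
  nra.
Qed.

Lemma err_lt_quarter d N j : 2 * 3 ^ N < (9/8) ^ d -> (j <= N)%nat -> err d j < 1/4.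
Proof.
  intros Hgrowth Hj. unfold err.
  pose proof (pow89_mul_pow98 d).
  pose proof (Rle_pow 3 j N ltac:(lra) Hj). pose proof (pow89_bounds d). nra.
Qed.

Lemma pow89_mul_lt_1 d x : x < (9/8) ^ d -> (8/9) ^ d * x < 1.
Proof.
  intros Hx. rewrite <- (pow89_mul_pow98 d).
  apply Rmult_lt_compat_l; [apply pow_lt; lra | exact Hx].
Qed.

Lemma qcoef_bounds d N j : 2 * 3 ^ N < (9/8) ^ d -> (j <= N)%nat ->
  opt_count j * dpow d j <= qcoef (sigmad d) j <= (opt_count j + 1/4) * dpow d j.
Proof.
  intros Hgrowth Hj. split; [apply qcoef_lower|].
  eapply Rle_trans; [exact (qcoef_upper d N j (tail_small_of_growth d N Hgrowth) Hj)|].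
  apply Rmult_le_compat_r; [apply Rlt_le, dpow_pos|].
  pose proof (err_lt_quarter d N j Hgrowth Hj). lra.
Qed.

Lemma ln98_pos : 0 < ln (9/8).
Proof. rewrite <- ln_1. apply ln_increasing; lra. Qed.

Lemma log98_mult x y : 0 < x -> 0 < y -> log98 (x * y) = log98 x + log98 y.
Proof. intros. unfold log98. rewrite ln_mult by assumption. field. apply Rgt_not_eq, ln98_pos. Qed.

Lemma log98_pow x k : 0 < x -> log98 (x ^ k) = INR k * log98 x.
Proof. intros. unfold log98. rewrite ln_pow by assumption. field. apply Rgt_not_eq, ln98_pos. Qed.

Lemma log98_pow98 d : log98 ((9/8) ^ d) = INR d.
Proof.
  rewrite log98_pow by lra. unfold log98. field_simplify; [lra|]. apply Rgt_not_eq, ln98_pos.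
Qed.

Lemma log98_lt_inv x y : 0 < x -> 0 < y -> log98 x < log98 y -> x < y.
Proof.
  intros Hx Hy H. apply ln_lt_inv; [assumption..|]. unfold log98 in H.
  pose proof ln98_pos.
  apply Rmult_lt_reg_r with (/ ln (9/8)); [now apply Rinv_0_lt_compat | exact H].
Qed.

Lemma log98_le x y : 0 < x -> x <= y -> log98 x <= log98 y.
Proof.
  intros Hx Hxy. unfold log98. pose proof ln98_pos. apply Rmult_le_compat_r.
  - now apply Rlt_le, Rinv_0_lt_compat.
  - destruct Hxy as [Hlt | ->]; [apply Rlt_le, ln_increasing|]; lra.
Qed.

Lemma pow_mul_add x a m k : x ^ (a * m + k) = (x ^ m) ^ a * x ^ k.
Proof. now rewrite pow_add, Nat.mul_comm, pow_mult. Qed.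

Lemma Dsigma_mul3_lt d m : Dsigma (3 * m + 3) < INR d -> 729 * (3 ^ m) ^ 6 < (9/8) ^ d.
Proof.
  unfold Dsigma. rewrite mod3_shift. cbn [Nat.modulo Nat.divmod fst snd Nat.sub Nat.eqb].
  intros HD.
  replace (729 * (3 ^ m) ^ 6) with (3 ^ (2 * (3 * m + 3)))
    by (replace (2 * (3 * m + 3))%nat with (6 * m + 6)%nat by lia;
        rewrite pow_mul_add; simpl; ring).
  apply log98_lt_inv; [apply pow_lt; lra.. |].
  rewrite log98_pow98, log98_pow, mult_INR by lra. simpl (INR 2). lra.
Qed.

Lemma Dsigma_mul3_add1_lt d m :
  Dsigma (3 * m + 4) < INR d -> 19683 * (3 ^ m) ^ 6 < 3 * (INR m + 2) * (9/8) ^ d.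
Proof.
  unfold Dsigma. rewrite mod3_shift. cbn [Nat.modulo Nat.divmod fst snd Nat.sub Nat.eqb].
  intros HD.
  replace (19683 * (3 ^ m) ^ 6) with (3 ^ (2 * (3 * m + 4) + 1))
    by (replace (2 * (3 * m + 4) + 1)%nat with (6 * m + 9)%nat by lia;
        rewrite pow_mul_add; simpl; ring).
  replace (3 * (INR m + 2)) with (INR (3 * m + 4) + 2) in *
    by (rewrite plus_INR, mult_INR; simpl; ring).
  pose proof (pos_INR (3 * m + 4)).
  apply log98_lt_inv; [apply pow_lt; lra | apply Rmult_lt_0_compat; [lra | apply pow_lt; lra] |].
  rewrite log98_mult, log98_pow98, log98_pow by (try apply pow_lt; lra).
  replace (INR (2 * (3 * m + 4) + 1)) with (2 * INR (3 * m + 4) + 1)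
    by (rewrite (plus_INR (2 * _) 1), (mult_INR 2); simpl (INR 2); simpl (INR 1); ring).
  lra.
Qed.

Lemma Dsigma_mul3_add2_lt d m : Dsigma (3 * m + 5) < INR d -> 2 * 3 ^ (3 * m + 6) < (9/8) ^ d.
Proof.
  intros HD. apply log98_lt_inv; [pose proof (pow_lt 3 (3 * m + 6)); lra | apply pow_lt; lra |].
  rewrite log98_pow98. eapply Rle_lt_trans; [|exact HD].
  unfold Dsigma. rewrite mod3_shift. cbn [Nat.modulo Nat.divmod fst snd Nat.sub Nat.eqb].
  destruct (Nat.eqb_spec (3 * m + 5) 5) as [H5|H5].
  - replace m with 0%nat by lia. apply log98_le; simpl; lra.
  - rewrite log98_mult, log98_pow by (try apply pow_lt; lra).
    replace (3 * m + 6)%nat with (S (3 * m + 5)) by lia. rewrite S_INR. lra.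
Qed.

Lemma dpow_mul_scale d r w x y z :
  INR (maxprod w) * INR (maxprod x) = r * (INR (maxprod y) * INR (maxprod z)) ->
  dpow d w * dpow d x = r ^ d * (dpow d y * dpow d z).
Proof. intros H. unfold dpow. now rewrite <- !Rpow_mult_distr, H. Qed.

Lemma mul_le_sq_of_bounds qa qb qc a b c ka kc cb lam :
  0 < a -> 0 < c -> 0 <= qa <= ka * a -> 0 <= qc <= kc * c -> 0 <= cb * b <= qb ->
  a * c = lam * (b * b) -> ka * kc * lam <= cb ^ 2 -> qa * qc <= qb ^ 2.
Proof.
  intros Ha Hc Hqa Hqc Hqb Hid Hk.
  apply Rle_trans with ((ka * a) * (kc * c)); [apply Rmult_le_compat; lra|].
  apply Rle_trans with ((cb * b) ^ 2); [|apply pow_incr; lra].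
  replace (ka * a * (kc * c)) with (ka * kc * lam * (b * b)) by (rewrite Rmult_assoc, <- Hid; ring).
  assert (Hb : 0 <= b * b) by nra.
  pose proof (Rmult_le_compat_r _ _ _ Hb Hk). simpl in *. lra.
Qed.

Lemma sq_lt_mul_of_bounds qa qb qc a b c kb ca cc lam :
  0 < a -> 0 < c -> 0 <= qb <= kb * b -> ca * a <= qa -> cc * c <= qc -> 0 <= ca -> 0 <= cc ->
  b * b = lam * (a * c) -> kb ^ 2 * lam < ca * cc -> qb ^ 2 < qa * qc.
Proof.
  intros Ha Hc Hqb Hqa Hqc Hca Hcc Hid Hk.
  apply Rle_lt_trans with ((kb * b) ^ 2); [apply pow_incr; lra|].
  replace ((kb * b) ^ 2) with (kb ^ 2 * lam * (a * c)) by (rewrite Rmult_assoc, <- Hid; ring).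
  apply Rlt_le_trans with (ca * cc * (a * c)); [apply Rmult_lt_compat_r; nra|].
  replace (ca * cc * (a * c)) with ((ca * a) * (cc * c)) by ring.
  apply Rmult_le_compat; nra.
Qed.

Lemma poly_le_pow3_mul3 m :
  (INR m + 1 + 1/4) * ((INR m + 1) * (INR m + 4) / 2 + 1/4) <= 729 * (3 ^ m) ^ 6.
Proof.
  pose proof (pow3_lower m). pose proof (pos_INR m). pose proof (pow_R1_Rle 3 m ltac:(lra)).
  pose proof (Rle_pow (3 ^ m) 3 6 ltac:(assumption) ltac:(lia)).
  set (t := 3 ^ m) in *. set (u := INR m) in *. clearbody t u.
  assert (K : (u + 1 + 1/4) * ((u + 1) * (u + 4) / 2 + 1/4) <= 2 * t * (3 * t ^ 2))
    by (apply Rmult_le_compat; simpl; nra).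
  simpl in K. pose proof (pow_le t 3 ltac:(lra)). simpl in *. lra.
Qed.

Lemma poly_le_pow3_mul3_add1 m :
  ((INR m + 1) * (INR m + 4) / 2 + 1/4) ^ 2 <= 6561 * (3 ^ m) ^ 6.
Proof.
  pose proof (pow3_lower m). pose proof (pos_INR m). pose proof (pow_R1_Rle 3 m ltac:(lra)).
  pose proof (Rle_pow (3 ^ m) 4 6 ltac:(assumption) ltac:(lia)).
  set (t := 3 ^ m) in *. set (u := INR m) in *. clearbody t u.
  apply Rle_trans with ((4 * t ^ 2) ^ 2); [apply pow_incr; simpl; nra|].
  rewrite Rpow_mult_distr, <- pow_mult. simpl (2 * 2)%nat. pose proof (pow_le t 4 ltac:(lra)). lra.
Qed.

Lemma qcoef_sq_ge_mul3 d m : Dsigma (3 * m + 3) < INR d ->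
  qcoef (sigmad d) (3 * m + 2) * qcoef (sigmad d) (3 * m + 4) <= qcoef (sigmad d) (3 * m + 3) ^ 2.
Proof.
  intros HD. pose proof (Dsigma_mul3_lt d m HD) as Hw.
  assert (Hgrowth : 2 * 3 ^ (3 * m + 4) < (9/8) ^ d).
  { rewrite pow_mul_add. pose proof (Rle_pow (3 ^ m) 3 6 (pow_R1_Rle 3 m ltac:(lra)) ltac:(lia)).
    pose proof (pow_le (3 ^ m) 3 (pow_le 3 m ltac:(lra))). simpl (3 ^ 4). lra. }
  destruct (qcoef_bounds d _ (3 * m + 2) Hgrowth ltac:(lia)) as [_ U2].
  destruct (qcoef_bounds d _ (3 * m + 4) Hgrowth ltac:(lia)) as [_ U4].
  pose proof (qcoef_lower d (3 * m + 3)) as L3.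
  rewrite opt_count_mul3_add2 in U2. rewrite opt_count_mul3_add4 in U4.
  rewrite opt_count_mul3_add3 in L3.
  eapply (mul_le_sq_of_bounds _ _ _ (dpow d (3 * m + 2)) (dpow d (3 * m + 3)) (dpow d (3 * m + 4))
            _ _ 1 ((8/9) ^ d) (dpow_pos d _) (dpow_pos d _)).
  - split; [apply Rlt_le, qcoef_pos | exact U2].
  - split; [apply Rlt_le, qcoef_pos | exact U4].
  - pose proof (dpow_pos d (3 * m + 3)). split; lra.
  - apply dpow_mul_scale. pose proof (f_equal INR (maxprod_sq_mul3 m)) as Hnat.
    rewrite !mult_INR in Hnat. simpl (INR 8) in Hnat. simpl (INR 9) in Hnat. lra.
  - pose proof (pow89_mul_lt_1 d _ Hw). pose proof (poly_le_pow3_mul3 m).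
    pose proof (pow89_bounds d).
    rewrite Rmult_comm. simpl (1 ^ 2). nra.
Qed.

Lemma qcoef_sq_lt_mul3_add1 d m : Dsigma (3 * m + 4) < INR d ->
  qcoef (sigmad d) (3 * m + 4) ^ 2 < qcoef (sigmad d) (3 * m + 3) * qcoef (sigmad d) (3 * m + 5).
Proof.
  intros HD. pose proof (Dsigma_mul3_add1_lt d m HD) as Hw. pose proof (pos_INR m).
  assert (Hgrowth : 2 * 3 ^ (3 * m + 5) < (9/8) ^ d).
  { rewrite pow_mul_add. pose proof (pow3_lower m). pose proof (pow_R1_Rle 3 m ltac:(lra)).
    pose proof (Rle_pow (3 ^ m) 1 3 ltac:(assumption) ltac:(lia)).
    pose proof (Rle_pow (3 ^ m) 3 6 ltac:(assumption) ltac:(lia)).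
    pose proof (pow_lt (9/8) d ltac:(lra)). rewrite pow_1 in *. simpl (3 ^ 5). nra. }
  destruct (qcoef_bounds d _ (3 * m + 4) Hgrowth ltac:(lia)) as [_ U4].
  pose proof (qcoef_lower d (3 * m + 3)) as L3.
  pose proof (qcoef_lower d (3 * m + 5)) as L5.
  rewrite opt_count_mul3_add4 in U4.
  rewrite opt_count_mul3_add3 in L3. rewrite opt_count_mul3_add5 in L5.
  eapply (sq_lt_mul_of_bounds _ _ _ (dpow d (3 * m + 3)) (dpow d (3 * m + 4)) (dpow d (3 * m + 5))
            _ _ _ ((8/9) ^ d) (dpow_pos d _) (dpow_pos d _)).
  - split; [apply Rlt_le, qcoef_pos | exact U4].
  - exact L3.
  - exact L5.
  - lra.
  - lra.
  - apply dpow_mul_scale. pose proof (f_equal INR (maxprod_sq_mul3_add1 m)) as Hnat.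
    rewrite !mult_INR in Hnat. simpl (INR 8) in Hnat. simpl (INR 9) in Hnat. lra.
  - pose proof (poly_le_pow3_mul3_add1 m). pose proof (pow89_bounds d).
    pose proof (pow89_mul_pow98 d). nra.
Qed.

Lemma qcoef_sq_ge_mul3_add2 d m : Dsigma (3 * m + 5) < INR d ->
  qcoef (sigmad d) (3 * m + 4) * qcoef (sigmad d) (3 * m + 6) <= qcoef (sigmad d) (3 * m + 5) ^ 2.
Proof.
  intros HD. pose proof (Dsigma_mul3_add2_lt d m HD) as Hgrowth. pose proof (pos_INR m).
  destruct (qcoef_bounds d _ (3 * m + 4) Hgrowth ltac:(lia)) as [_ U4].
  destruct (qcoef_bounds d _ (3 * m + 6) Hgrowth ltac:(lia)) as [_ U6].
  pose proof (qcoef_lower d (3 * m + 5)) as L5.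
  rewrite opt_count_mul3_add4 in U4. rewrite opt_count_mul3_add5 in L5.
  replace (opt_count (3 * m + 6)) with 1 in U6
    by (replace (3 * m + 6)%nat with (3 * (m + 2))%nat by lia; now rewrite opt_count_mul3).
  eapply (mul_le_sq_of_bounds _ _ _ (dpow d (3 * m + 4)) (dpow d (3 * m + 5)) (dpow d (3 * m + 6))
            _ _ (INR m + 2) 1 (dpow_pos d _) (dpow_pos d _)).
  - split; [apply Rlt_le, qcoef_pos | exact U4].
  - split; [apply Rlt_le, qcoef_pos | exact U6].
  - pose proof (dpow_pos d (3 * m + 5)). split; [nra | exact L5].
  - rewrite <- (pow1 d). apply dpow_mul_scale.
    pose proof (f_equal INR (maxprod_sq_mul3_add2 m)) as Hnat. rewrite !mult_INR in Hnat. lra.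
  - simpl. nra.
Qed.

Lemma ratio_lt_1_iff x y z : 0 < x -> 0 < z -> (y ^ 2 / (x * z) < 1 <-> y ^ 2 < x * z).
Proof.
  intros Hx Hz. assert (Hxz : 0 < x * z) by nra.
  unfold Rdiv. split; intros H.
  - apply (Rmult_lt_compat_r (x * z)) in H; [|exact Hxz].
    rewrite Rmult_assoc, Rinv_l, Rmult_1_r, Rmult_1_l in H by lra. exact H.
  - apply (Rmult_lt_reg_r (x * z)); [exact Hxz|].
    rewrite Rmult_assoc, Rinv_l, Rmult_1_r, Rmult_1_l by lra. exact H.
Qed.

Lemma mod3_cases n : (3 <= n)%nat ->
  exists m, n = (3 * m + 3)%nat \/ n = (3 * m + 4)%nat \/ n = (3 * m + 5)%nat.
Proof.
  intros Hn. exists ((n - 3) / 3)%nat.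
  pose proof (Nat.div_mod (n - 3) 3 ltac:(lia)).
  pose proof (Nat.mod_upper_bound (n - 3) 3 ltac:(lia)).
  lia.
Qed.

Theorem corollary2 (n d : nat) :
  (3 <= n)%nat ->
  Dsigma n < INR d ->
  (qcoef (sigmad d) n ^ 2 / (qcoef (sigmad d) (n - 1) * qcoef (sigmad d) (n + 1)) < 1
   <-> (n mod 3 = 1)%nat).
Proof.
  intros Hn HD. rewrite ratio_lt_1_iff by apply qcoef_pos.
  destruct (mod3_cases n Hn) as [m [-> | [-> | ->]]]; rewrite mod3_shift.
  - replace (3 * m + 3 - 1)%nat with (3 * m + 2)%nat by lia.
    replace (3 * m + 3 + 1)%nat with (3 * m + 4)%nat by lia.
    pose proof (qcoef_sq_ge_mul3 d m HD). split; [intros; exfalso; lra | discriminate].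
  - replace (3 * m + 4 - 1)%nat with (3 * m + 3)%nat by lia.
    replace (3 * m + 4 + 1)%nat with (3 * m + 5)%nat by lia.
    pose proof (qcoef_sq_lt_mul3_add1 d m HD). split; intros _; [reflexivity | assumption].
  - replace (3 * m + 5 - 1)%nat with (3 * m + 4)%nat by lia.
    replace (3 * m + 5 + 1)%nat with (3 * m + 6)%nat by lia.
    pose proof (qcoef_sq_ge_mul3_add2 d m HD). split; [intros; exfalso; lra | discriminate].
Qed.
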